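(* Let $p=p(n)$ and $G\in\mathcal G(n,p)$. If $p=o(n^{-3/2})$, then with high probability $G$ is reconstructible from its $1$-neighbourhoods.
   Context: $\mathcal G(n,p)$ is the Erdős–Rényi random graph on vertex set $[n]$ in which each pair is an edge independently with probability $p$. ''With high probability'' means with probability tending to $1$ as $n\to\infty$. For a graph $G$, a vertex $v$ and an integer $r\ge1$, the $r$-neighbourhood $N_r^{(G)}(v)$ is the subgraph of $G$ induced by the vertices at distance at most $r$ from $v$, considered as a graph rooted at $v$. Graphs $G$ and $H$ have isomorphic $r$-neighbourhoods if there is a bijection $\phi:V(G)\to V(H)$ such that for every $v\in V(G)$ there is a graph isomorphism $N_r^{(G)}(v)\to N_r^{(H)}(\phi(v))$ mapping $v$ to $\phi(v)$. $G$ is reconstructible from its $r$-neighbourhoods if every graph $H$ with $r$-neighbourhoods isomorphic to those of $G$ is isomorphic to $G$. *)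

From HB Require Import structures.
From mathcomp Require Import all_boot all_order all_fingroup all_algebra.
From mathcomp Require Import all_classical all_reals all_analysis.
Set Implicit Arguments. Unset Strict Implicit. Unset Printing Implicit Defensive.
Import Order.TTheory GRing.Theory Num.Theory.
Local Open Scope ring_scope.

(* A simple graph on vertex set [n] = 'I_n is given by a set E of 2-subsets.  *)
Definition pairs (n : nat) : {set {set 'I_n}} := [set e : {set 'I_n} | #|e| == 2%N].

Definition adj (n : nat) (E : {set {set 'I_n}}) : rel 'I_n :=
  fun x y => (x != y) && ([set x; y] \in E).

Fixpoint ball (n : nat) (E : {set {set 'I_n}}) (r : nat) (v : 'I_n) : {set 'I_n} :=
  match r with
  | 0 => [set v]
  | r'.+1 => ball E r' v :|: [set u | [exists w in ball E r' v, adj E w u]]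
  end.

(* A bijection between the two (equal-size) vertex sets is written as the
   restriction of a permutation of 'I_n. *)
Definition rooted_nbhd_iso (n : nat) (E F : {set {set 'I_n}}) (r : nat)
    (v w : 'I_n) : Prop :=
  exists f : {perm 'I_n},
    [/\ f v = w, f @: ball E r v = ball F r w &
        {in ball E r v &, forall x y, adj F (f x) (f y) = adj E x y}].

Definition iso_nbhds (n : nat) (E F : {set {set 'I_n}}) (r : nat) : Prop :=
  exists phi : {perm 'I_n}, forall v, rooted_nbhd_iso E F r v (phi v).

Definition graph_iso (n : nat) (E F : {set {set 'I_n}}) : Prop :=
  exists s : {perm 'I_n}, forall x y, adj F (s x) (s y) = adj E x y.

(* Reconstructible from r-neighbourhoods. Any graph H admitting a bijection
   from [n] has an isomorphic copy on [n], so quantifying over graphs on 'I_n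
   is no loss of generality. *)
Definition reconstructible (n : nat) (E : {set {set 'I_n}}) (r : nat) : Prop :=
  forall F : {set {set 'I_n}}, iso_nbhds E F r -> graph_iso E F.

Definition gnp_prob {R : realType} (n : nat) (p : R)
    (Q : {set {set 'I_n}} -> bool) : R :=
  \sum_(E in powerset (pairs n) | Q E)
     \prod_(e in pairs n) (if e \in E then p else 1 - p).
Arguments gnp_prob {R} n p Q.
Arguments ball n E r v.
Arguments adj n E x y.
Arguments rooted_nbhd_iso n E F r v w.
Arguments iso_nbhds n E F r.
Arguments graph_iso n E F.
Arguments reconstructible n E r.

From HB Require Import structures.
From mathcomp Require Import all_boot all_order all_fingroup all_algebra.
Import Order.TTheory GRing.Theory Num.Theory.
Set Implicit Arguments. Unset Strict Implicit. Unset Printing Implicit Defensive.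

(* If p = o(n^(-3/2)), then G(n, p) has maximum degree at most one with high
   probability, and every such graph is reconstructible from its
   1-neighbourhoods.

   A graph of maximum degree at most one is encoded by the
     involution sending each vertex to its unique neighbour (or to itself if
     it is isolated).  Two involutions of a finite set with the same number
     of fixed points are conjugate; hence two such graphs with the same
     number of isolated vertices are isomorphic.  A 1-neighbourhood
     isomorphism preserves degrees, so it preserves both maximum degree at
     most one and the number of isolated vertices.
   - Probability.  By the union bound over the n^3 triples (v, a, b), the
     probability that some vertex v has two neighbours a, b is at most
     n^3 p^2 = (p n^(3/2))^2, which tends to 0; the theorem follows by
     squeezing the probability of reconstructibility between 1 - n^3 p^2
     and 1.
   The finite part only needs finite sets and ordered rings; the analysis
   library is loaded afterwards, for the limit argument alone. *)

Section FiniteInjections.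
Variable T : finType.
Implicit Types A B : {set T}.

Lemma injection_into A B : #|A| <= #|B| ->
  exists f : T -> T, {in A &, injective f} /\ {in A, forall x, f x \in B}.
Proof.
move=> leAB; pose f x := nth x (enum B) (index x (enum A)).
have ltB x : x \in A -> index x (enum A) < size (enum B).
  by move=> Ax; rewrite -cardE (leq_trans _ leAB) // cardE index_mem mem_enum.
exists f; split=> [x y Ax Ay /eqP fxy | x Ax]; last by rewrite -mem_enum mem_nth ?ltB.
rewrite /f (set_nth_default y x (ltB x Ax)) nth_uniq ?ltB ?enum_uniq // in fxy.
by move/eqP: fxy; apply: index_inj; rewrite ?mem_enum.
Qed.

Lemma injection_respecting A A1 B B1 :
  A1 \subset A -> B1 \subset B -> #|A1| = #|B1| -> #|A| = #|B| ->
  exists g : T -> T, {in A &, injective g} /\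
    {in A, forall x, g x \in B /\ (g x \in B1) = (x \in A1)}.
Proof.
move=> sA1A sB1B eq1 eqAB.
have [g1 [g1_inj g1B1]] := injection_into (eq_leq eq1).
have [g2 [g2_inj g2B2]] : exists g2 : T -> T,
    {in A :\: A1 &, injective g2} /\ {in A :\: A1, forall x, g2 x \in B :\: B1}.
  by apply: injection_into; rewrite !cardsDS // eq1 eqAB.
pose g x := if x \in A1 then g1 x else g2 x.
have gB x : x \in A -> g x \in B /\ (g x \in B1) = (x \in A1).
  rewrite /g; case: ifP => [xA1 _ | xA1 xA].
    by rewrite (subsetP sB1B) ?g1B1.
  have /setDP[g2B /negbTE g2B1] : g2 x \in B :\: B1 by rewrite g2B2 // inE xA1.
  by rewrite g2B g2B1.
exists g; split=> // x y xA yA gxy.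
have := (gB y yA).2; rewrite -gxy (gB x xA).2 => cls.
move: gxy; rewrite /g cls; case: ifP => yA1.
  by apply: g1_inj; rewrite ?cls.
by apply: g2_inj; rewrite !inE ?cls yA1 ?xA ?yA.
Qed.

End FiniteInjections.

Section InvolutionConjugacy.
Variable T : finType.

(* Fixed points of k, and the orbit representatives of an involution k:
   the points that come first (in the enumeration of T) in their k-orbit. *)
Definition fixpoints (k : T -> T) : {set T} := [set x | k x == x].
Definition orbit_reps (k : T -> T) : {set T} :=
  [set x | enum_rank x <= enum_rank (k x)].

Lemma fixpoints_sub_reps (k : T -> T) : fixpoints k \subset orbit_reps k.
Proof. by apply/subsetP => x; rewrite !inE => /eqP ->. Qed.

Section OneInvolution.
Variable k : T -> T.
Hypothesis kK : involutive k.

Lemma partner_of_nonrep x : x \notin orbit_reps k -> k x \in orbit_reps k.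
Proof. by rewrite !inE kK -ltnNge => /ltnW. Qed.

Lemma rep_pair_fixed x : x \in orbit_reps k -> k x \in orbit_reps k -> k x = x.
Proof.
rewrite !inE kK => le1 le2; apply: enum_rank_inj; apply/val_inj/eqP.
by rewrite eqn_leq le1 le2.
Qed.

(* Each 2-cycle has one representative and each fixed point is its own,
   so twice the number of representatives is #|T| + #|fixpoints k|. *)
Lemma card_orbit_reps : (#|orbit_reps k|).*2 = #|T| + #|fixpoints k|.
Proof.
have coverT : orbit_reps k :|: k @: orbit_reps k = [set: T].
  apply/setP => x; rewrite in_setT in_setU.
  have [//|xR /=] := boolP (x \in orbit_reps k).
  by apply/imsetP; exists (k x); rewrite ?kK ?partner_of_nonrep.
have meet_fix : orbit_reps k :&: k @: orbit_reps k = fixpoints k.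
  apply/setP => x; rewrite in_setI [x \in fixpoints k]inE.
  apply/andP/eqP => [[xR /imsetP[y yR xE]] | kx].
    by rewrite xE kK (rep_pair_fixed yR) // -xE.
  by split; [rewrite inE kx | apply/imsetP; exists x; rewrite ?kx // inE kx].
by rewrite -addnn -{2}(card_imset _ (inv_inj kK)) -cardsUI coverT meet_fix cardsT.
Qed.

End OneInvolution.

(* Two involutions of a finite set with the same number of fixed points are
   conjugate: match their representatives, fixed points to fixed points, and
   extend to the partner of each representative. *)
Lemma involution_conj (i j : T -> T) : involutive i -> involutive j ->
  #|fixpoints i| = #|fixpoints j| -> exists s : {perm T}, forall x, s (i x) = j (s x).
Proof.
move=> iK jK eq_fix.
have eq_reps : #|orbit_reps i| = #|orbit_reps j|.
  by apply: double_inj; rewrite !card_orbit_reps // eq_fix.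
have [g [g_inj gR]] :=
  injection_respecting (fixpoints_sub_reps i) (fixpoints_sub_reps j) eq_fix eq_reps.
have g_fix x : x \in orbit_reps i -> (j (g x) == g x) = (i x == x).
  by move=> /gR[_]; rewrite !inE.
pose s0 x := if x \in orbit_reps i then g x else j (g (i x)).
have s0_inj : injective s0.
  (* a representative and a non-representative never collide, since g maps
     the non-fixed representative i y to a non-fixed representative *)
  have mixed x y :
      x \in orbit_reps i -> y \notin orbit_reps i -> g x != j (g (i y)).
    move=> xR yR; apply/eqP => gxy.
    have iyR := partner_of_nonrep iK yR.
    have fix_giy : j (g (i y)) = g (i y).
      by apply: (rep_pair_fixed jK); [case: (gR _ iyR) | rewrite -gxy; case: (gR _ xR)].
    have /eqP : i (i y) == i y by rewrite -g_fix ?fix_giy.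
    by rewrite iK => iy; move: yR; rewrite inE -iy leqnn.
  move=> x y; rewrite /s0.
  case: (boolP (x \in orbit_reps i)) => xR; case: (boolP (y \in orbit_reps i)) => yR.
  - exact: g_inj.
  - by move/eqP; rewrite (negbTE (mixed _ _ xR yR)).
  - by move/esym/eqP; rewrite (negbTE (mixed _ _ yR xR)).
  - move/(inv_inj jK)/g_inj => /(_ (partner_of_nonrep iK xR)).
    by move=> /(_ (partner_of_nonrep iK yR))/(inv_inj iK).
exists (perm s0_inj) => x; rewrite !permE /s0.
have [xR | xR] := boolP (x \in orbit_reps i); last by rewrite iK partner_of_nonrep ?jK.
have [ixR | ixR] := boolP (i x \in orbit_reps i); last by rewrite iK.
have ix := rep_pair_fixed iK xR ixR.
by rewrite ix; apply/esym/eqP; rewrite g_fix // ix.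
Qed.
End InvolutionConjugacy.

Section GraphsOfMaxDegreeOne.
Variable n : nat.
Implicit Types (E F : {set {set 'I_n}}) (x y : 'I_n).

Definition nbhd E x : {set 'I_n} := [set y | adj E x y].

Lemma adjC E x y : adj E x y = adj E y x.
Proof. by rewrite /adj eq_sym setUC. Qed.

Lemma adj_irr E x : adj E x x = false.
Proof. by rewrite /adj eqxx. Qed.

Lemma ball1 E x : ball E 1 x = x |: nbhd E x.
Proof.
apply/setP=> y; rewrite /= !inE; congr (_ || _).
apply/existsP/idP => [[w /andP[/set1P -> //]] | xy].
by exists x; rewrite inE eqxx xy.
Qed.

(* An isomorphism of rooted 1-neighbourhoods preserves the degree of the root,
   since the 1-neighbourhood of x has #|nbhd E x| + 1 vertices. *)
Lemma rooted_iso_degree E F v w :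
  rooted_nbhd_iso E F 1 v w -> #|nbhd F w| = #|nbhd E v|.
Proof.
have card_ball G x : #|ball G 1 x| = (#|nbhd G x|).+1.
  by rewrite ball1 cardsU1 inE adj_irr.
case=> f [_ f_ball _]; apply: succn_inj.
by rewrite -!card_ball -f_ball card_imset //; apply: perm_inj.
Qed.

Definition max_deg_le1 E := [forall x, #|nbhd E x| <= 1].

Definition partner E x := odflt x [pick y | adj E x y].

Section Partner.
Variable E : {set {set 'I_n}}.
Hypothesis E_deg : max_deg_le1 E.

Lemma adj_partner x y : adj E x y = (y == partner E x) && (y != x).
Proof.
rewrite /partner; case: pickP => [z xz | no_nbr] /=; last first.
  by rewrite no_nbr; case: eqP => // ->; rewrite eqxx.
apply/idP/andP => [xy | [/eqP -> _] //]; split.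
  by apply/eqP; apply: (card_le1_eqP (forallP E_deg x)); rewrite inE.
by apply: contraTneq xy => ->; rewrite adj_irr.
Qed.

Lemma partnerK : involutive (partner E).
Proof.
move=> x; have [px|px] := eqVneq (partner E x) x; first by rewrite !px.
have : adj E x (partner E x) by rewrite adj_partner eqxx px.
by rewrite adjC adj_partner => /andP[/eqP <-].
Qed.

Lemma fixpoints_partner : fixpoints (partner E) = [set x | nbhd E x == set0].
Proof.
apply/setP => x; rewrite !inE; apply/eqP/eqP => [px | /setP nb0].
  by apply/setP => y; rewrite !inE adj_partner px andbN.
apply/eqP; apply: contraT => px.
by have := nb0 (partner E x); rewrite !inE adj_partner eqxx px.
Qed.

End Partner.

(* Graphs of maximum degree at most one with the same number of isolated
   vertices are isomorphic: their partner involutions are conjugate. *)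
Lemma max_deg_le1_iso E F : max_deg_le1 E -> max_deg_le1 F ->
  #|fixpoints (partner E)| = #|fixpoints (partner F)| -> graph_iso E F.
Proof.
move=> E_deg F_deg eq_fix.
have [s sP] := involution_conj (partnerK E_deg) (partnerK F_deg) eq_fix.
exists s => x y.
by rewrite !adj_partner // -sP !(inj_eq perm_inj).
Qed.

Lemma max_deg_le1_reconstructible E : max_deg_le1 E -> reconstructible E 1.
Proof.
move=> E_deg F [phi phiP].
have deg v : #|nbhd F (phi v)| = #|nbhd E v| by apply: rooted_iso_degree.
have F_deg : max_deg_le1 F.
  by apply/forallP => w; rewrite -(permKV phi w) deg (forallP E_deg).
apply: max_deg_le1_iso => //.
have -> : fixpoints (partner E) = phi @^-1: fixpoints (partner F).
  by apply/setP => v; rewrite !fixpoints_partner // !inE -!cards_eq0 deg.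
by rewrite card_preimset //; apply: perm_inj.
Qed.

End GraphsOfMaxDegreeOne.

Local Open Scope ring_scope.

Lemma sum_subsets_prod (R : comPzRingType) (T : finType) (S : {set T})
    (a b : T -> R) :
  \sum_(J in powerset S) \prod_(i in S) (if i \in J then a i else b i)
  = \prod_(i in S) (a i + b i).
Proof.
pose a' i := if i \in S then a i else 0.
pose b' i := if i \in S then b i else 1.
have -> : \prod_(i in S) (a i + b i) = \prod_i (a' i + b' i).
  by rewrite big_mkcond /=; apply: eq_bigr => i _; rewrite /a' /b'; case: ifP; rewrite ?add0r.
rewrite bigA_distr big_mkcond /=; apply: eq_bigr => J _; rewrite powersetE.
have [sJS | /subsetPn[i iJ iS]] := boolP (J \subset S); last first.
  by rewrite (bigD1 i) //= iJ /a' (negbTE iS) mul0r.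
rewrite big_mkcond /=; apply: eq_bigr => i _; rewrite /a' /b'.
by case: ifP => // iS; rewrite (contraFF (subsetP sJS i) iS).
Qed.

Lemma union_bound (R : numDomainType) (X K : finType) (D : {pred X})
    (Q : pred X) (A : K -> pred X) (w : X -> R) :
  {in D, forall x, 0 <= w x} -> {in D, forall x, Q x -> exists k, A k x} ->
  \sum_(x in D | Q x) w x <= \sum_k \sum_(x in D | A k x) w x.
Proof.
move=> w_ge0 covered; rewrite (exchange_big_dep (mem D)) /=; last by move=> k x _ /andP[].
rewrite big_mkcondr /=; apply: ler_sum => x xD; have w0 := w_ge0 x xD.
case: ifP => [Qx | _]; last by apply: sumr_ge0.
by have [k Akx] := covered x xD Qx; rewrite (bigD1 k) ?xD //= lerDl; apply: sumr_ge0.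
Qed.

Section RandomGraph.
Variable R : numDomainType.
Variables (n : nat) (p : R).
Hypothesis p01 : 0 <= p <= 1.

Definition gnp_weight (E : {set {set 'I_n}}) : R :=
  \prod_(e in pairs n) (if e \in E then p else 1 - p).

Lemma gnp_weight_ge0 E : 0 <= gnp_weight E.
Proof.
case/andP: p01 => p0 p1; apply: prodr_ge0 => e _.
by case: ifP; rewrite ?subr_ge0.
Qed.

Lemma gnp_weight_total : \sum_(E in powerset (pairs n)) gnp_weight E = 1.
Proof. by rewrite sum_subsets_prod big1 // => e _; rewrite subrKC. Qed.

Lemma gnp_contains (T : {set {set 'I_n}}) : T \subset pairs n ->
  \sum_(E in powerset (pairs n) | T \subset E) gnp_weight E = p ^+ #|T|.
Proof.
move=> sTS; rewrite big_mkcondr /=.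
transitivity (\sum_(E in powerset (pairs n)) \prod_(e in pairs n)
   (if e \in E then p else (if e \in T then 0 else 1 - p))).
  apply: eq_bigr => E _; have [sTE | /subsetPn[e eT eE]] := boolP (T \subset E).
    apply: eq_bigr => e _; case: ifP => // eE.
    by rewrite (contraFF (subsetP sTE e) eE).
  by rewrite (bigD1 e) ?(subsetP sTS) //= (negbTE eE) eT mul0r.
rewrite sum_subsets_prod (bigID (mem T)) /= [X in _ * X]big1 ?mulr1; last first.
  by move=> e /andP[_ /negbTE ->]; rewrite subrKC.
rewrite -prodr_const; apply: eq_big => [e | e /andP[_ ->]]; last by rewrite addr0.
by rewrite andb_idl // => /(subsetP sTS).
Qed.

Definition cherry (v a b : 'I_n) : {set {set 'I_n}} := [set [set v; a]; [set v; b]].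

Definition has_cherry (E : {set {set 'I_n}}) (k : 'I_n * 'I_n * 'I_n) : bool :=
  let: (v, a, b) := k in [&& v != a, v != b, a != b & cherry v a b \subset E].

Lemma high_degree_cherry E : ~~ max_deg_le1 E -> exists k, has_cherry E k.
Proof.
case/forallPn => v; rewrite -ltnNge => /card_gt1P[a [b [va vb ab]]].
move: va vb; rewrite !inE /adj => /andP[va vaE] /andP[vb vbE].
by exists (v, a, b); rewrite /= va vb ab subUset !sub1set vaE vbE.
Qed.

Lemma gnp_cherry k :
  \sum_(E in powerset (pairs n) | has_cherry E k) gnp_weight E <= p ^+ 2.
Proof.
case: k => [[v a] b] /=.
have [/and3P[va vb ab] | no_cherry] := boolP [&& v != a, v != b & a != b]; last first.
  rewrite big_pred0 ?exprn_ge0 //; first by case/andP: p01.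
  by move=> E; apply/negbTE; apply: contraNN no_cherry => /andP[_ /and4P[-> -> -> _]].
have card_cherry : #|cherry v a b| = 2.
  suff neq : [set v; a] != [set v; b] by rewrite cards2 neq.
  apply: contraNneq ab => /setP/(_ a).
  by rewrite !inE eqxx orbT [a == v]eq_sym (negbTE va) => /= <-.
have sub_pairs : cherry v a b \subset pairs n.
  by rewrite subUset !sub1set !inE !cards2 va vb.
rewrite (eq_bigl (fun E => (E \in powerset (pairs n)) && (cherry v a b \subset E))).
  by rewrite gnp_contains // card_cherry.
by move=> E; rewrite va vb ab.
Qed.

Lemma gnp_high_degree :
  \sum_(E in powerset (pairs n) | ~~ max_deg_le1 E) gnp_weight E <= n%:R ^+ 3 * p ^+ 2.
Proof.
apply: le_trans (union_bound (D := powerset (pairs n)) (A := fun k E => has_cherry E k) _ _) _.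
- by move=> E _; apply: gnp_weight_ge0.
- by move=> E _; apply: high_degree_cherry.
apply: le_trans; first by apply: ler_sum => k _; apply: gnp_cherry.
by rewrite sumr_const !card_prod card_ord -[_ *+ _]mulr_natl !natrM -expr2 -exprSr.
Qed.

Lemma gnp_max_deg_le1_bounds (Q : pred {set {set 'I_n}}) :
  (forall E, max_deg_le1 E -> Q E) ->
  1 - n%:R ^+ 3 * p ^+ 2 <= \sum_(E in powerset (pairs n) | Q E) gnp_weight E <= 1.
Proof.
move=> Q_deg; apply/andP; split; last first.
  rewrite -gnp_weight_total [X in _ <= X](bigID Q) /= lerDl.
  by apply: sumr_ge0 => E _; apply: gnp_weight_ge0.
rewrite lerBlDr -{1}gnp_weight_total (bigID (@max_deg_le1 n)) /= lerD ?gnp_high_degree //.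
rewrite big_mkcondr [X in _ <= X]big_mkcondr /=; apply: ler_sum => E _.
by case: ifP => [/Q_deg -> // | _]; case: ifP => // _; apply: gnp_weight_ge0.
Qed.

End RandomGraph.

From mathcomp Require Import all_classical all_reals all_analysis.
Import numFieldNormedType.Exports.
Local Open Scope classical_set_scope.

Lemma powR_three_halves_sqr (R : realType) (x : R) : 0 <= x ->
  x `^ (3 / 2) * x `^ (3 / 2) = x ^+ 3.
Proof.
move=> x0; rewrite -expr2 -powR_mulrn ?powR_ge0 // -powRrM.
have -> : (3 / 2 * 2%:R : R) = 3%:R by rewrite -mulrA mulVf ?mulr1 // pnatr_eq0.
by rewrite powR_mulrn.
Qed.

Theorem theorem1p7 (R : realType) (p : nat -> R) :
  (forall n : nat, 0 <= p n <= 1) ->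
  (fun n : nat => p n * n%:R `^ (3 / 2)) @ \oo --> (0 : R) ->
  (fun n : nat => gnp_prob n (p n) (fun E => `[< reconstructible E 1 >])) @ \oo --> (1 : R).
Proof.
move=> p01 h_cvg; set h := fun n : nat => p n * n%:R `^ (3 / 2).
have h_sqr n : n%:R ^+ 3 * p n ^+ 2 = h n * h n.
  by rewrite -powR_three_halves_sqr // /h mulrACA -expr2 mulrC.
have bounds n : 1 - h n * h n <=
    gnp_prob n (p n) (fun E => `[< reconstructible E 1 >]) <= 1.
  rewrite -h_sqr; apply: (gnp_max_deg_le1_bounds (p01 n)) => E E_deg.
  exact/asboolT/max_deg_le1_reconstructible.
apply: (squeeze_cvgr (f := fun n => 1 - h n * h n) (h := fun=> 1)).
- by apply: nearW => n; apply: bounds.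
- by rewrite -[1 in X in _ --> X](subr0 1) -(mulr0 0); apply: cvgB; [apply: cvg_cst | apply: cvgM].
- exact: cvg_cst.
Qed.
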